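(* Let $\mathbb{K}$ be a field of characteristic zero and let $V$ be a four-dimensional $\mathbb{K}$-vector space with basis $\{e_1,e_2,e_3,e_4\}$. For $s\in\mathbb{K}$ let $\mathfrak{A}_s=(V,\mu_s)$ be the anti-commutative algebra whose only nonzero products of basis elements (up to anti-commutativity) are $$\mu_s(e_1,e_3)=e_1,\quad \mu_s(e_1,e_4)=s e_2,\quad \mu_s(e_2,e_3)=s e_2.$$ Let $t\in\mathbb{K}$ with $t\neq 0,1$. Then $$\phi_{4,t}(\mathfrak{A}_s)=\begin{cases}6, & s=0,\\ 1, & s=t,\\ 0, & \text{otherwise,}\end{cases}$$ and consequently, for $t_1,t_2\in\mathbb{K}\setminus\{0,1\}$, the functions $\phi_{4,t_1}$ and $\phi_{4,t_2}$ are equal if and only if $t_1=t_2$.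
   Context: All algebras are finite dimensional over a field $\mathbb{K}$ of characteristic zero. An anti-commutative algebra is a vector space $V$ with a bilinear map $\mu:V\times V\to V$ satisfying $\mu(X,Y)=-\mu(Y,X)$. For constants $\alpha,\beta,\gamma\in\mathbb{K}$, an $(\alpha,\beta,\gamma)$-derivation of $(V,\mu)$ is a linear map $D:V\to V$ with $\alpha D\mu(X,Y)=\beta\mu(DX,Y)+\gamma\mu(X,DY)$ for all $X,Y\in V$; the space of these is denoted $\mathcal{D}(\alpha,\beta,\gamma)(V,\mu)$. Let $C^2(V;V)$ be the space of antisymmetric bilinear maps $V\times V\to V$ and $n=\dim V$. For $t\in\mathbb{K}$, $\phi_{n,t}:C^2(V;V)\to\{0,1,\dots,n^2\}$ is defined by $\phi_{n,t}(\mu)=\dim\mathcal{D}(t,1,0)(V,\mu)$; we write $\phi_{n,t}(\mathfrak{A})$ for $\phi_{n,t}(\mu)$ when $\mathfrak{A}=(V,\mu)$. *)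

From HB Require Import structures.
From mathcomp Require Import all_boot all_order all_algebra.
Set Implicit Arguments. Unset Strict Implicit. Unset Printing Implicit Defensive.
Import Order.TTheory GRing.Theory Num.Theory.
Local Open Scope ring_scope.

(* V = K^n, realized as row vectors 'rV[K]_n; the standard basis vector e_i
   (index i : 'I_n, 0-based) is delta_mx 0 i. A linear map D : V -> V is a
   matrix D : 'M[K]_n acting on row vectors, D X := X *m D. *)

Definition ev {K : fieldType} {n : nat} (i : 'I_n) : 'rV[K]_n := delta_mx 0 i.

(* An antisymmetric bilinear map V x V -> V is determined by its structure
   constants c i j = mu(e_i, e_j) with c i j = - c j i. *)
Definition C2 (K : fieldType) (n : nat) :=
  {c : 'I_n -> 'I_n -> 'rV[K]_n | forall i j, c i j = - c j i}.

Definition bil {K : fieldType} {n : nat} (mu : C2 K n) (X Y : 'rV[K]_n) : 'rV[K]_n :=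
  \sum_(i < n) \sum_(j < n) (X 0 i * Y 0 j) *: proj1_sig mu i j.

Definition is_derivation {K : fieldType} {n : nat} (a b g : K) (mu : C2 K n)
  (D : 'M[K]_n) : Prop :=
  forall X Y : 'rV[K]_n,
    a *: (bil mu X Y *m D) = b *: bil mu (X *m D) Y + g *: bil mu X (Y *m D).

(* The defect of D with respect to the derivation identity, which is a bilinear
   map V x V -> V recorded by its values on pairs of basis vectors. *)
Definition der_defect {K : fieldType} {n : nat} (a b g : K) (mu : C2 K n)
  (D : 'M[K]_n) : {ffun 'I_n * 'I_n -> 'rV[K]_n} :=
  [ffun p => a *: (bil mu (ev p.1) (ev p.2) *m D)
             - (b *: bil mu (ev p.1 *m D) (ev p.2) + g *: bil mu (ev p.1) (ev p.2 *m D))].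

Definition Der_space {K : fieldType} {n : nat} (a b g : K) (mu : C2 K n)
  : {vspace 'M[K]_n} := lker (linfun (der_defect a b g mu)).

Definition phi {K : fieldType} (n : nat) (t : K) (mu : C2 K n) : nat :=
  \dim (Der_space t 1 0 mu).

Definition skew {K : fieldType} {n : nat} (u : 'I_n -> 'I_n -> 'rV[K]_n)
  (i j : 'I_n) : 'rV[K]_n :=
  if (i < j)%N then u i j else if (j < i)%N then - u j i else 0.

Lemma skew_anti {K : fieldType} {n : nat} (u : 'I_n -> 'I_n -> 'rV[K]_n) i j :
  skew u i j = - skew u j i.
Proof.
rewrite /skew; case: (ltngtP i j) => [lt|lt|eq]; rewrite ?opprK //.
by rewrite oppr0.
Qed.

(* The algebra A_s on K^4: mu(e1,e3) = e1, mu(e1,e4) = s e2, mu(e2,e3) = s e2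
   (0-based indices: e1 = ev 0, e2 = ev 1, e3 = ev 2, e4 = ev 3). *)
Definition A_upper {K : fieldType} (s : K) (i j : 'I_4) : 'rV[K]_4 :=
  match val i, val j with
  | 0%N, 2%N => ev (inord 0)
  | 0%N, 3%N => s *: ev (inord 1)
  | 1%N, 2%N => s *: ev (inord 1)
  | _, _ => 0
  end.

Definition A_alg {K : fieldType} (s : K) : C2 K 4 :=
  exist _ (skew (A_upper s)) (skew_anti (A_upper s)).

Arguments phi {K} n t mu.

From Pilot Require Import Defs.
From HB Require Import structures.
From mathcomp Require Import all_boot all_order all_algebra ring.
Set Implicit Arguments. Unset Strict Implicit. Unset Printing Implicit Defensive.
Import GRing.Theory.
Local Open Scope ring_scope.

(* Evaluating t D mu(X, Y) = mu(D X, Y) on pairs of basis vectors turns the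
   condition on D into a linear system in its 16 entries.  For s = 0 its
   solutions are the D with D e1 = 0 and image in span(e2, e4), a space of
   dimension 2 * 3 = 6.  For s <> 0 it forces D e1 = a e2, D e3 = b e4 and D = 0
   elsewhere, with t a = s b and (t - s) a = 0: a line when s = t and 0
   otherwise.  Evaluating phi_{4,t1} and phi_{4,t2} at A_{t1} then separates t1
   from t2.  Only t, t - 1, s and t - s are ever inverted. *)

Section Derivations.
Variables (K : fieldType) (n : nat) (mu : C2 K n).

Lemma bil_linearl (c : K) X Z Y :
  bil mu (c *: X + Z) Y = c *: bil mu X Y + bil mu Z Y.
Proof.
rewrite /bil scaler_sumr -big_split /=; apply: eq_bigr => i _.
rewrite scaler_sumr -big_split /=; apply: eq_bigr => j _.
by rewrite !mxE scalerA -scalerDl mulrDl mulrA.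
Qed.

Lemma bil_linearr (c : K) X Z Y :
  bil mu Y (c *: X + Z) = c *: bil mu Y X + bil mu Y Z.
Proof.
rewrite /bil scaler_sumr -big_split /=; apply: eq_bigr => i _.
rewrite scaler_sumr -big_split /=; apply: eq_bigr => j _.
by rewrite !mxE scalerA -scalerDl mulrDr mulrCA.
Qed.

Lemma der_defect_is_linear (a b g : K) : linear (der_defect a b g mu).
Proof.
move=> c D1 D2; apply/ffunP => p; rewrite !ffunE.
rewrite !mulmxDr -!scalemxAr bil_linearl bil_linearr.
by apply/rowP => k; rewrite !mxE; ring.
Qed.

HB.instance Definition _ (a b g : K) :=
  GRing.isLinear.Build K 'M[K]_n {ffun 'I_n * 'I_n -> 'rV[K]_n} *:%R
    (der_defect a b g mu) (der_defect_is_linear a b g).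

Lemma Der_spaceP (a b g : K) (D : 'M[K]_n) :
  reflect (forall i j, a *: (bil mu (ev i) (ev j) *m D)
                       = b *: bil mu (ev i *m D) (ev j) + g *: bil mu (ev i) (ev j *m D))
          (D \in Der_space a b g mu).
Proof.
rewrite memv_ker lfunE /=; apply: (iffP eqP) => [/ffunP defect0 i j | der_ij].
  by apply/eqP; rewrite -subr_eq0; move: (defect0 (i, j)); rewrite !ffunE => ->.
by apply/ffunP => -[i j]; rewrite !ffunE /= der_ij subrr.
Qed.

End Derivations.

Lemma free_delta_mx (K : fieldType) m n (s : seq ('I_m * 'I_n)) :
  uniq s -> free [seq delta_mx p.1 p.2 : 'M[K]_(m, n) | p <- s].
Proof.
case: s => [|p0 s] s_uniq; first exact: nil_free.
set X := map _ _; rewrite -[X]in_tupleE.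
have size_X : size X = size (p0 :: s) by rewrite size_map.
apply/freeP => k /matrixP sum0 i.
have := sum0 (nth p0 (p0 :: s) i).1 (nth p0 (p0 :: s) i).2.
rewrite summxE (bigD1 i) //= big1 => [|l ne_li].
  by rewrite !mxE (nth_map p0) -?size_X // !mxE !eqxx mulr1 addr0.
rewrite !mxE (nth_map p0) -?size_X // !mxE -xpair_eqE -!surjective_pairing.
by rewrite nth_uniq -?size_X // (inj_eq val_inj) eq_sym (negbTE ne_li) mulr0.
Qed.

Lemma eq0_of_diff_multiple (R : pzRingType) (c x y z : R) :
  x = y -> z = c * (x - y) -> z = 0.
Proof. by move=> -> ->; rewrite subrr mulr0. Qed.

Definition i0 : 'I_4 := @Ordinal 4 0 isT.
Definition i1 : 'I_4 := @Ordinal 4 1 isT.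
Definition i2 : 'I_4 := @Ordinal 4 2 isT.
Definition i3 : 'I_4 := @Ordinal 4 3 isT.

Lemma ord4P (P : 'I_4 -> Prop) : P i0 -> P i1 -> P i2 -> P i3 -> forall i, P i.
Proof.
move=> P0 P1 P2 P3 [[|[|[|[|//]]]] lti].
- by rewrite (_ : Ordinal lti = i0) //; apply: val_inj.
- by rewrite (_ : Ordinal lti = i1) //; apply: val_inj.
- by rewrite (_ : Ordinal lti = i2) //; apply: val_inj.
- by rewrite (_ : Ordinal lti = i3) //; apply: val_inj.
Qed.

Lemma big_ord4 (V : nmodType) (F : 'I_4 -> V) :
  \sum_(i < 4) F i = F i0 + F i1 + F i2 + F i3.
Proof.
rewrite !big_ord_recr big_ord0 /= add0r.
by congr (_ + _ + _ + _); congr F; apply: val_inj.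
Qed.

Section AlgebraA.
Variable K : fieldType.
Implicit Types (s t : K) (X Y : 'rV[K]_4) (D : 'M[K]_4).

Definition A_mul_coord s X Y (k : 'I_4) : K :=
  if k == i0 then X 0 i0 * Y 0 i2 - X 0 i2 * Y 0 i0
  else if k == i1 then s * (X 0 i0 * Y 0 i3 - X 0 i3 * Y 0 i0 + X 0 i1 * Y 0 i2 - X 0 i2 * Y 0 i1)
  else 0.

Lemma bil_A_alg s X Y : bil (A_alg s) X Y = \row_k A_mul_coord s X Y k.
Proof.
have inord0 : inord 0 = i0 by apply: val_inj; rewrite /= inordK.
have inord1 : inord 1 = i1 by apply: val_inj; rewrite /= inordK.
apply/rowP => k; rewrite /bil summxE big_ord4 !summxE !big_ord4.
rewrite /= /Defs.skew /A_upper /= inord0 inord1.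
by elim/ord4P: k; rewrite /A_mul_coord /ev !mxE /=; ring.
Qed.

Lemma Der_A_algP t s D :
  reflect (forall i j k, t * (A_mul_coord s (ev i) (ev j) i0 * D i0 k
                              + A_mul_coord s (ev i) (ev j) i1 * D i1 k)
                         = A_mul_coord s (row i D) (ev j) k)
          (D \in Der_space t 1 0 (A_alg s)).
Proof.
have lhsE i j k : (t *: (bil (A_alg s) (ev i) (ev j) *m D)) 0 k
    = t * (A_mul_coord s (ev i) (ev j) i0 * D i0 k + A_mul_coord s (ev i) (ev j) i1 * D i1 k).
  by rewrite bil_A_alg !mxE big_ord4 !mxE /A_mul_coord /= !mul0r !addr0.
apply: (iffP (Der_spaceP _ _ _ _ _)) => [der_ij i j k | der_ijk i j].
  by move: (der_ij i j) => /rowP/(_ k); rewrite lhsE scale1r scale0r addr0 -rowE bil_A_alg mxE.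
by apply/rowP => k; rewrite lhsE der_ijk scale1r scale0r addr0 -rowE bil_A_alg mxE.
Qed.

Ltac simpl_A_mul := rewrite /A_mul_coord /ev !mxE /=.

(* Closes [z = 0] when [z] is, up to sign, the difference of the two sides of
   the identity [H i j k] of [Der_A_algP]. *)
Ltac derivation_eq H i j k :=
  first [ apply: (eq0_of_diff_multiple (c := 1) (H i j k)); simpl_A_mul; ring
        | apply: (eq0_of_diff_multiple (c := -1) (H i j k)); simpl_A_mul; ring ].

Lemma Der_A_alg0P t D : t != 0 -> t != 1 ->
  D \in Der_space t 1 0 (A_alg 0) <->
  [/\ forall k, D i0 k = 0, forall k, D k i0 = 0 & forall k, D k i2 = 0].
Proof.
move=> t0 t1; split=> [/Der_A_algP H | [row0 col0 col2]]; last first.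
  apply/Der_A_algP => i j k.
  by elim/ord4P: i; elim/ord4P: j; elim/ord4P: k;
    simpl_A_mul; rewrite ?row0 ?col0 ?col2; ring.
have t1' : t - 1 != 0 by rewrite subr_eq0.
have h01 : D i0 i1 = 0 by apply: (mulfI t0); rewrite mulr0; derivation_eq H i2 i0 i1.
have h02 : D i0 i2 = 0 by apply: (mulfI t0); rewrite mulr0; derivation_eq H i2 i0 i2.
have h03 : D i0 i3 = 0 by apply: (mulfI t0); rewrite mulr0; derivation_eq H i2 i0 i3.
have h00 : D i0 i0 = 0 by apply: (mulfI t1'); rewrite mulr0; derivation_eq H i0 i2 i0.
have h22 : D i2 i2 = 0.
  apply: (eq0_of_diff_multiple (c := 1) (H i2 i0 i0)).
  by simpl_A_mul; rewrite h00; ring.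
have h12 : D i1 i2 = 0 by derivation_eq H i1 i0 i0.
have h32 : D i3 i2 = 0 by derivation_eq H i3 i0 i0.
have h10 : D i1 i0 = 0 by derivation_eq H i1 i2 i0.
have h20 : D i2 i0 = 0 by derivation_eq H i2 i2 i0.
have h30 : D i3 i0 = 0 by derivation_eq H i3 i2 i0.
by split; elim/ord4P.
Qed.

Definition A_alg0_support : seq ('I_4 * 'I_4) :=
  [seq (i, j) | i <- [:: i1; i2; i3], j <- [:: i1; i3]].

Lemma Der_A_alg0E t : t != 0 -> t != 1 ->
  Der_space t 1 0 (A_alg 0) = <<[seq delta_mx p.1 p.2 | p <- A_alg0_support]>>%VS.
Proof.
move=> t0 t1; apply/eqP; rewrite eqEsubv; apply/andP; split.
  apply/subvP => D /(Der_A_alg0P _ t0 t1) [row0 col0 col2].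
  have -> : D = \sum_(p <- A_alg0_support) D p.1 p.2 *: delta_mx p.1 p.2.
    apply/matrixP => i j; rewrite summxE /= !big_cons big_nil.
    by elim/ord4P: i; elim/ord4P: j; rewrite !mxE /= ?row0 ?col0 ?col2; ring.
  rewrite big_seq; apply: rpred_sum => p p_in.
  by rewrite rpredZ // memv_span // (map_f (fun q => delta_mx q.1 q.2)).
apply/span_subvP => _ /mapP [p p_in ->]; apply/(Der_A_alg0P _ t0 t1).
have /andP [p1 p2] : (p.1 != i0) && (p.2 \notin [:: i0; i2]).
  by move: p p_in; apply/allP.
move: p2; rewrite !inE negb_or => /andP [p2_0 p2_2].
split=> k; rewrite mxE.
- by rewrite eq_sym (negbTE p1).
- by rewrite [i0 == _]eq_sym (negbTE p2_0) andbF.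
- by rewrite [i2 == _]eq_sym (negbTE p2_2) andbF.
Qed.

Lemma phi_A_alg0 t : t != 0 -> t != 1 -> phi 4 t (A_alg 0) = 6%N.
Proof.
move=> t0 t1; rewrite /phi Der_A_alg0E //.
by move/eqP: (@free_delta_mx K _ _ A_alg0_support isT); rewrite size_map.
Qed.

Lemma Der_A_alg_shape t s D : t != 0 -> t != 1 -> s != 0 ->
    D \in Der_space t 1 0 (A_alg s) ->
  [/\ D = D i0 i1 *: delta_mx i0 i1 + D i2 i3 *: delta_mx i2 i3,
       t * D i0 i1 = s * D i2 i3 & (t - s) * D i0 i1 = 0].
Proof.
move=> t0 t1 s0 /Der_A_algP H.
have t1' : t - 1 != 0 by rewrite subr_eq0.
have ts0 : t * s != 0 by rewrite mulf_neq0.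
have h10 : D i1 i0 = 0 by apply: (mulfI s0); rewrite mulr0; derivation_eq H i1 i3 i1.
have h20 : D i2 i0 = 0 by apply: (mulfI s0); rewrite mulr0; derivation_eq H i2 i3 i1.
have h30 : D i3 i0 = 0 by apply: (mulfI s0); rewrite mulr0; derivation_eq H i3 i3 i1.
have h12 : D i1 i2 = 0 by apply: (mulfI ts0); rewrite mulr0; derivation_eq H i0 i3 i2.
have h13 : D i1 i3 = 0 by apply: (mulfI ts0); rewrite mulr0; derivation_eq H i0 i3 i3.
have h02 : D i0 i2 = 0 by apply: (mulfI t0); rewrite mulr0; derivation_eq H i0 i2 i2.
have h03 : D i0 i3 = 0 by apply: (mulfI t0); rewrite mulr0; derivation_eq H i0 i2 i3.
have h00 : D i0 i0 = 0 by apply: (mulfI t1'); rewrite mulr0; derivation_eq H i0 i2 i0.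
have h11 : D i1 i1 = 0.
  have /eqP : s * (t * D i1 i1 - D i0 i0) = 0 by derivation_eq H i0 i3 i1.
  by rewrite h00 subr0 !mulf_eq0 (negbTE s0) (negbTE t0) => /eqP.
have h21 : D i2 i1 = 0 by apply: (mulfI s0); rewrite mulr0; derivation_eq H i2 i2 i1.
have h31 : D i3 i1 = 0 by apply: (mulfI s0); rewrite mulr0; derivation_eq H i3 i2 i1.
have h32 : D i3 i2 = 0 by apply: (mulfI s0); rewrite mulr0; derivation_eq H i3 i1 i1.
have h22 : D i2 i2 = 0.
  have /eqP : s * (D i2 i2 - t * D i1 i1) = 0 by derivation_eq H i2 i1 i1.
  by rewrite h11 mulr0 subr0 mulf_eq0 (negbTE s0) => /eqP.
have h33 : D i3 i3 = 0.
  have /eqP : s * (D i3 i3 - t * D i1 i1) = 0 by derivation_eq H i3 i0 i1.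
  by rewrite h11 mulr0 subr0 mulf_eq0 (negbTE s0) => /eqP.
split.
- apply/matrixP => i j.
  by elim/ord4P: i; elim/ord4P: j; rewrite !mxE /= ?mulr0 ?mulr1 ?addr0 ?add0r.
- by apply/eqP; rewrite -subr_eq0; apply/eqP; derivation_eq H i2 i0 i1.
- by derivation_eq H i0 i2 i1.
Qed.

Lemma Der_A_alg_diag t : delta_mx i0 i1 + delta_mx i2 i3 \in Der_space t 1 0 (A_alg t).
Proof.
apply/Der_A_algP => i j k.
by elim/ord4P: i; elim/ord4P: j; elim/ord4P: k; simpl_A_mul; ring.
Qed.

Lemma phi_A_alg_diag t : t != 0 -> t != 1 -> phi 4 t (A_alg t) = 1%N.
Proof.
move=> t0 t1; rewrite /phi.
have -> : Der_space t 1 0 (A_alg t) = <[delta_mx i0 i1 + delta_mx i2 i3]>%VS.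
  apply/eqP; rewrite eqEsubv; apply/andP; split.
    apply/subvP => D /(Der_A_alg_shape t0 t1 t0) [eqD eq_t _].
    by rewrite eqD (mulfI t0 eq_t) -scalerDr memvZ // memv_line.
  by rewrite -span_seq1; apply/span_subvP => _ /[1!inE] /eqP ->; apply: Der_A_alg_diag.
rewrite dim_vline; case: eqP => // /matrixP/(_ i0 i1).
by rewrite !mxE /= addr0 => /eqP; rewrite oner_eq0.
Qed.

Lemma phi_A_alg_generic t s : t != 0 -> t != 1 -> s != 0 -> s != t ->
  phi 4 t (A_alg s) = 0%N.
Proof.
move=> t0 t1 s0 st; rewrite /phi.
suff -> : Der_space t 1 0 (A_alg s) = 0%VS by rewrite dimv0.
apply/eqP; rewrite -subv0; apply/subvP => D /(Der_A_alg_shape t0 t1 s0) [eqD eq_ts eq_0].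
have ts0 : t - s != 0 by rewrite subr_eq0 eq_sym.
have D01 : D i0 i1 = 0 by apply: (mulfI ts0); rewrite eq_0 mulr0.
have D23 : D i2 i3 = 0 by apply: (mulfI s0); rewrite mulr0 -eq_ts D01 mulr0.
by rewrite eqD D01 D23 !scale0r addr0 memv0.
Qed.

Lemma phi_A_alg t s : t != 0 -> t != 1 ->
  phi 4 t (A_alg s) = if s == 0 then 6%N else if s == t then 1%N else 0%N.
Proof.
move=> t0 t1; have [->|s0] := eqP; first exact: phi_A_alg0.
have [->|st] := eqP; first exact: phi_A_alg_diag.
by apply: phi_A_alg_generic => //; apply/eqP.
Qed.

End AlgebraA.

Theorem proposition2p1 (K : fieldType) (charK0 : [pchar K] =i pred0) :
  (forall t : K, t != 0 -> t != 1 ->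
     forall s : K,
       phi 4 t (A_alg s) = (if s == 0 then 6%N else if s == t then 1%N else 0%N))
  /\
  (forall t1 t2 : K, t1 != 0 -> t1 != 1 -> t2 != 0 -> t2 != 1 ->
     (phi 4 t1 = phi 4 t2 <-> t1 = t2)).
Proof.
split=> [t t0 t1 s | t1 t2 t1_0 t1_1 t2_0 t2_1]; first exact: phi_A_alg.
split=> [eq_phi | -> //].
have := congr1 (fun f => f (A_alg t1)) eq_phi.
rewrite /= !phi_A_alg // (negbTE t1_0) eqxx.
by case: eqP.
Qed.
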